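(* Let $\mathcal T\in\Sigma^n$ be a text. The permutations $\pi,\bar\pi$ defined as $\pi(i)=\mathrm{IPA}[i]$ and $\bar\pi(i)=n-\mathrm{IPA}[i]+1$ for $i\in[n]$ are order-preserving for $\mathcal T$. Furthermore, $|\mathtt{st\text{-}colex}^-|\le\bar r$ and $|\mathtt{st\text{-}colex}^+|\le\bar r$.
   Context: A text is a string $\mathcal T\in\Sigma^n$ over an integer alphabet whose last symbol $\mathcal T[n]=\$$ occurs only there and is smallest. $\mathrm{IPA}[i]$ is the rank of the prefix $\mathcal T[1,i]$ among all prefixes of $\mathcal T$ in colexicographic order. A permutation $\pi:[n]\to[n]$ is order-preserving for $\mathcal T$ if for all $i,j\in[n-1]$, $\pi(i)<\pi(j)$ and $\mathcal T[i,i+1]=\mathcal T[j,j+1]$ imply $\pi(i+1)<\pi(j+1)$. For $i\ne j$, $\mathrm{rlce}(i,j)$ is the length of the longest common prefix of $\mathcal T[i,n]$ and $\mathcal T[j,n]$; $\mathrm{LPF}_\pi[i]=0$ if $\pi(i)=1$, else $\mathrm{LPF}_\pi[i]=\max_{\pi(j)<\pi(i)}\mathrm{rlce}(j,i)$; $\mathrm{PDA}_\pi$ is the set $\{i+\mathrm{LPF}_\pi[i]:i\in[n]\}$ sorted colexicographically by the prefixes $\mathcal T[1,j]$. $\mathtt{st\text{-}colex}^-=\mathrm{PDA}_\pi$ and $\mathtt{st\text{-}colex}^+=\mathrm{PDA}_{\bar\pi}$. $\bar r$ is the number of maximal equal-letter runs of $\mathrm{coBWT}(\mathcal T)$, obtained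 by sorting all rotations of $\mathcal T$ colexicographically and concatenating their first characters. *)

(* Indices are 0-based throughout: paper position i (1-based)
   is position i-1 here; paper rank r (1-based) is r-1 here. *)
From mathcomp Require Import all_boot.
Set Implicit Arguments. Unset Strict Implicit. Unset Printing Implicit Defensive.

Definition is_text (T : seq nat) : Prop :=
  0 < size T /\
  forall i, i < (size T).-1 -> nth 0 T (size T).-1 < nth 0 T i.

Fixpoint lex_lt (s t : seq nat) : bool :=
  match s, t with
  | [::], [::] => false
  | [::], _ :: _ => true
  | _ :: _, [::] => false
  | x :: s', y :: t' => (x < y) || ((x == y) && lex_lt s' t')
  end.

Definition colex_lt (s t : seq nat) : bool := lex_lt (rev s) (rev t).
Definition colex_le (s t : seq nat) : bool := ~~ colex_lt t s.

Definition pref (T : seq nat) (i : nat) : seq nat := take i.+1 T.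

Definition IPA (T : seq nat) (i : nat) : nat :=
  count (fun j => colex_lt (pref T j) (pref T i)) (iota 0 (size T)).

(* pi-bar(i) = n - IPA[i] + 1 in 1-based terms. *)
Definition IPAbar (T : seq nat) (i : nat) : nat := size T - (IPA T i).+1.

Definition is_perm_on (n : nat) (pi : nat -> nat) : Prop :=
  (forall i, i < n -> pi i < n) /\
  (forall i j, i < n -> j < n -> pi i = pi j -> i = j).

Definition order_preserving (T : seq nat) (pi : nat -> nat) : Prop :=
  forall i j, i < (size T).-1 -> j < (size T).-1 ->
    pi i < pi j -> nth 0 T i = nth 0 T j -> nth 0 T i.+1 = nth 0 T j.+1 ->
    pi i.+1 < pi j.+1.

Fixpoint lcp (s t : seq nat) : nat :=
  match s, t with
  | x :: s', y :: t' => if x == y then (lcp s' t').+1 else 0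
  | _, _ => 0
  end.

Definition rlce (T : seq nat) (i j : nat) : nat := lcp (drop i T) (drop j T).

Definition LPF (T : seq nat) (pi : nat -> nat) (i : nat) : nat :=
  if pi i == 0 then 0
  else \max_(j < size T | pi j < pi i) rlce T j i.

Definition PDA (T : seq nat) (pi : nat -> nat) : seq nat :=
  sort (fun a b => colex_le (pref T a) (pref T b))
       (undup [seq i + LPF T pi i | i <- iota 0 (size T)]).

Definition coBWT (T : seq nat) : seq nat :=
  [seq head 0 r | r <- sort colex_le [seq rot k T | k <- iota 0 (size T)]].

Fixpoint runs_from (x : nat) (s : seq nat) : nat :=
  match s with
  | [::] => 1
  | y :: s' => (if y == x then 0 else 1) + runs_from y s'
  end.
Definition runs (s : seq nat) : nat :=
  match s with [::] => 0 | x :: s' => runs_from x s' end.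

From mathcomp Require Import all_boot all_order zify.
Set Implicit Arguments. Unset Strict Implicit. Unset Printing Implicit Defensive.
Import Order.TTheory.

(* Both [IPA] and [IPAbar] rank the positions of [T] by the colex order of their
   prefixes, increasingly resp. decreasingly.  Appending a common letter to two
   prefixes preserves their colex order, and since the sentinel is unique and
   smallest this holds even cyclically; order preservation follows.
   For the bound, send a value [x = i + LPF i] to the rank of the cyclic
   predecessor [p] of [x]; in the coBWT, read in that rank order, the letter there
   is the one following [p] cyclically.  If the same letter followed the position
   [q] ranked just before [p], then the witness of [LPF i], shifted to [p]'s side,
   is ranked below [p], hence not above [q]; as colex neighbours have the longest
   common left contexts, [q] agrees with [p] on the last [LPF i] letters.  The
   occurrence ending just after [q] is then ranked before [i] and matches
   [LPF i + 1] letters from [i], contradicting maximality.  So the values of the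
   PDA inject into the run starts of the coBWT (read backwards for [IPAbar]). *)

(** * Lexicographic order and longest common prefixes *)

Lemma lex_ltE (s t : seq nat) : lex_lt s t = (s < t :> seqlexi nat)%O.
Proof.
by elim: s t => [|x s IH] [|y t] //=; rewrite ltxi_cons IH !leEnat; case: ltngtP.
Qed.

Lemma colex_ltE (s t : seq nat) : colex_lt s t = (rev s < rev t :> seqlexi nat)%O.
Proof. exact: lex_ltE. Qed.

Lemma colex_leE (s t : seq nat) : colex_le s t = (rev s <= rev t :> seqlexi nat)%O.
Proof. by rewrite /colex_le colex_ltE leNgt. Qed.

Lemma colex_lt_total (s t : seq nat) : s != t -> colex_lt s t || colex_lt t s.
Proof. by rewrite !colex_ltE -(inj_eq (can_inj revK)); apply: (@lt_total _ (seqlexi nat)). Qed.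

Lemma colex_lt_asym (s t : seq nat) : colex_lt s t -> colex_lt t s = false.
Proof. by rewrite !colex_ltE; apply: lt_gtF. Qed.

Lemma colex_le_total : total colex_le.
Proof. by move=> s t; rewrite !colex_leE le_total. Qed.

Lemma colex_le_trans : transitive colex_le.
Proof. by move=> s t u; rewrite !colex_leE; apply: le_trans. Qed.

Lemma colex_le_anti : antisymmetric colex_le.
Proof. by move=> s t; rewrite !colex_leE => /le_anti/(can_inj revK). Qed.

Lemma ltxi_cat d (T : porderType d) (s1 s2 u1 u2 : seq T) :
  (s1 < s2 :> seqlexi T)%O -> (forall w, s2 = s1 ++ w -> (u1 < w ++ u2 :> seqlexi T)%O) ->
  (s1 ++ u1 < s2 ++ u2 :> seqlexi T)%O.
Proof.
elim: s1 s2 => [|x s1 IH] [|y s2] //=; first by move=> _ /(_ _ erefl).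
rewrite !ltxi_cons => /andP[xy lt12] Hw; rewrite xy /=; apply/implyP => yx.
have exy : x = y by apply: le_anti; rewrite xy yx.
by subst y; apply: IH => [|w E]; [exact: implyP lt12 yx | apply: Hw; rewrite E].
Qed.

Lemma lcpC (s t : seq nat) : lcp s t = lcp t s.
Proof. by elim: s t => [|x s IH] [|y t] //=; rewrite eq_sym IH. Qed.

Lemma lcp_geP (s t : seq nat) k :
  k <= lcp s t <->
  forall m, m < k -> [/\ m < size s, m < size t & nth 0 s m = nth 0 t m].
Proof.
elim: s t k => [|x s IH] [|y t] [|k] //=; try by split=> // /(_ 0 isT) [].
case: eqP => [<-|xy]; last by split=> // /(_ 0 isT) [_ _ /xy].
rewrite ltnS IH; split=> H m m_lt.
  by case: m m_lt => [|m] //= /H[]; rewrite !ltnS.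
by have [] := H m.+1 m_lt.
Qed.

Lemma lcp_geE (s t : seq nat) k :
  (k <= lcp s t) = [&& k <= size s, k <= size t & take k s == take k t].
Proof.
elim: s t k => [|x s IH] [|y t] [|k] //=; rewrite ?andbF // eqseq_cons.
by case: eqP => //= _; rewrite !ltnS ?IH ?andbF.
Qed.

Lemma lcp_ltxi_mid (s1 s2 s3 : seq nat) :
  (s1 < s2 :> seqlexi nat)%O -> (s2 < s3 :> seqlexi nat)%O ->
  lcp s1 s3 <= minn (lcp s1 s2) (lcp s2 s3).
Proof.
elim: s1 s2 s3 => [|x s1 IH] [|y s2] [|z s3] //=; rewrite !ltxi_cons !leEnat.
case: (ltngtP x y) => [xy|//|<-] /=.
  by move=> _ /andP[yz _]; rewrite (ltn_eqF (leq_trans xy yz)).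
case: (ltngtP x z) => [//|//|_] /= lt12 lt23.
by rewrite minnSS ltnS; apply: IH.
Qed.

(** * Runs and permutations of [0, n) *)

Definition run_start (s : seq nat) k := (k == 0) || (nth 0 s k.-1 != nth 0 s k).

Lemma runs_from_count x s :
  runs_from x s = count (run_start (x :: s)) (iota 0 (size s).+1).
Proof.
elim: s x => [|y s IH] x //=.
rewrite IH /= (iotaDl 1 1) count_map.
rewrite [count (preim _ _) _](@eq_in_count _ _ (run_start (y :: s))) => [|k]; last first.
  by rewrite mem_iota; case: k.
rewrite [run_start _ 1]/run_start /= eq_sym.
by case: eqP => _; rewrite ?add0n ?add1n.
Qed.

Lemma runs_count s : runs s = count (run_start s) (iota 0 (size s)).
Proof. by case: s => [|x s] //; apply: runs_from_count. Qed.

Lemma runs_rcons s y : 0 < size s -> runs (rcons s y) = runs s + (y != last 0 s).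
Proof.
case: s => [|x s] // _ /=; elim: s x => [|z s IH] x /=.
  by rewrite addnC eq_sym; case: eqP.
by rewrite IH addnA.
Qed.

Lemma runs_rev s : runs (rev s) = runs s.
Proof.
elim: s => [|x [|y s] IH] //.
rewrite rev_cons runs_rcons ?size_rev // IH rev_cons last_rcons /=.
by rewrite addnC eq_sym; case: eqP.
Qed.

Lemma is_perm_on_perm_eq n f :
  is_perm_on n f -> perm_eq [seq f i | i <- iota 0 n] (iota 0 n).
Proof.
case=> f_lt f_inj.
have f_uniq : uniq [seq f i | i <- iota 0 n].
  by rewrite map_inj_in_uniq ?iota_uniq // => i j; rewrite !mem_iota; apply: f_inj.
have f_sub : {subset [seq f i | i <- iota 0 n] <= iota 0 n}.
  by move=> y /mapP[i]; rewrite !mem_iota => i_lt ->; apply: f_lt.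
have [_ Ef] := uniq_min_size f_uniq f_sub (eq_leq (esym (size_map f _))).
by apply: uniq_perm; rewrite ?iota_uniq.
Qed.

Lemma is_perm_on_surj n f r : is_perm_on n f -> r < n -> exists2 p, p < n & f p = r.
Proof.
move=> /is_perm_on_perm_eq/perm_mem Ef r_lt.
have : r \in iota 0 n by rewrite mem_iota.
by rewrite -Ef => /mapP[p]; rewrite mem_iota => p_lt ->; exists p.
Qed.

Lemma count_lt_rel (A : eqType) (r : rel A) (s : seq A) x y :
  irreflexive r -> transitive r -> x \in s -> r x y -> count (r^~ x) s < count (r^~ y) s.
Proof.
move=> r_irr r_tr xs rxy.
have disj : count (predI (r^~ x) (pred1 x)) s = 0.
  apply/eqP; rewrite -leqn0 -(count_pred0 s) sub_count // => z /andP[/= + /eqP zx].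
  by rewrite zx r_irr.
have sub : count (r^~ x) s + count (pred1 x) s <= count (r^~ y) s.
  rewrite -(count_predUI (r^~ x) (pred1 x)) disj addn0.
  by apply: sub_count => z /orP[/= zx|/eqP ->//]; apply: r_tr zx rxy.
have x_cnt : 0 < count (pred1 x) s.
  by rewrite -has_count; apply/hasP; exists x => /=.
by apply: leq_trans sub; rewrite -addn1 leq_add2l.
Qed.

(** * Colex ranks of the prefixes of a text *)

Definition colex_ranking (T : seq nat) (pi : nat -> nat) :=
  (forall a b, a < size T -> b < size T -> (pi a < pi b) = colex_lt (pref T a) (pref T b)) \/
  (forall a b, a < size T -> b < size T -> (pi a < pi b) = colex_lt (pref T b) (pref T a)).

Section Text.

Variable T : seq nat.
Hypothesis T_text : is_text T.

Local Notation n := (size T).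
Local Notation t i := (nth 0 T i).
Local Notation P i := (pref T i).

Lemma size_gt0 : 0 < n.
Proof. by case: T_text. Qed.

Lemma text_last_uniq a : a < n -> t a = t n.-1 -> a = n.-1.
Proof.
move=> a_lt ta; case: T_text => _ last_min.
case: (ltnP a n.-1) => [/last_min|]; last by lia.
by rewrite ta ltnn.
Qed.

Definition cyc_succ a := if a.+1 < n then a.+1 else 0.
Definition cyc_pred x := if x is k.+1 then k else n.-1.

Lemma cyc_succ_lt a : cyc_succ a < n.
Proof. by rewrite /cyc_succ; case: ifP => // _; apply: size_gt0. Qed.

Lemma cyc_succE a : a.+1 < n -> cyc_succ a = a.+1.
Proof. by rewrite /cyc_succ => ->. Qed.

Lemma cyc_pred_lt x : x < n -> cyc_pred x < n.
Proof. by case: x => [|x] /=; lia. Qed.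

Lemma cyc_predK x : x < n -> cyc_succ (cyc_pred x) = x.
Proof.
rewrite /cyc_succ; case: x => [|x] /= x_lt; last by rewrite x_lt.
by rewrite prednK // ltnn.
Qed.

Lemma size_pref a : a < n -> size (P a) = a.+1.
Proof. exact: size_takel. Qed.

Lemma rev_pref a : a < n -> rev (P a) = t a :: rev (take a T).
Proof. by move=> a_lt; rewrite /pref (take_nth 0 a_lt) rev_rcons. Qed.

Lemma rev_prefS a : a.+1 < n -> rev (P a.+1) = t a.+1 :: rev (P a).
Proof. exact: rev_pref. Qed.

Lemma colex_lt_pref_last a : a < n.-1 -> colex_lt (P n.-1) (P a).
Proof.
move=> a_lt; have n_gt0 := size_gt0.
have last_lt : t n.-1 < t a by case: T_text => _; apply.
rewrite colex_ltE !rev_pref; try lia.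
by rewrite ltxi_cons !leEnat ltnW //= leqNgt last_lt.
Qed.

Lemma colex_lt_pref0 a : 0 < a < n -> t a = t 0 -> colex_lt (P 0) (P a).
Proof.
case/andP => a_gt0 a_lt ta.
rewrite colex_ltE (rev_pref a_lt) (rev_pref (ltn_trans a_gt0 a_lt)) ta take0 eqhead_ltxiE.
by rewrite ltxi0s -size_eq0 size_rev size_take a_lt -lt0n.
Qed.

Lemma colex_lt_pref_cyc_succ a b : a < n -> b < n -> t (cyc_succ a) = t (cyc_succ b) ->
  colex_lt (P (cyc_succ a)) (P (cyc_succ b)) = colex_lt (P a) (P b).
Proof.
rewrite /cyc_succ => a_lt b_lt.
case: (ltnP a.+1 n) => an; case: (ltnP b.+1 n) => bn tab.
- by rewrite !colex_ltE !rev_prefS // tab eqhead_ltxiE.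
- have -> : b = n.-1 by lia.
  have a_last : colex_lt (P n.-1) (P a) by apply: colex_lt_pref_last; lia.
  by rewrite (colex_lt_asym a_last) colex_lt_asym // colex_lt_pref0.
- have -> : a = n.-1 by lia.
  have b_last : colex_lt (P n.-1) (P b) by apply: colex_lt_pref_last; lia.
  by rewrite b_last colex_lt_pref0.
- have -> : a = b by lia.
  by rewrite !colex_ltE !ltxx.
Qed.

Lemma pref_inj a b : a < n -> b < n -> P a = P b -> a = b.
Proof. by move=> a_lt b_lt Eab; have := size_pref a_lt; rewrite Eab size_pref // => -[]. Qed.

Lemma IPA_lt_of_colex a b : a < n -> colex_lt (P a) (P b) -> IPA T a < IPA T b.
Proof.
move=> a_lt ab; apply: (count_lt_rel (r := fun i j => colex_lt (P i) (P j))) => //.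
- by move=> i; rewrite colex_ltE ltxx.
- by move=> j i k; rewrite !colex_ltE; apply: lt_trans.
- by rewrite mem_iota.
Qed.

Lemma IPA_ltE a b : a < n -> b < n -> (IPA T a < IPA T b) = colex_lt (P a) (P b).
Proof.
move=> a_lt b_lt; apply/idP/idP => [ab|]; last exact: IPA_lt_of_colex.
have ba : P a != P b by apply: contraTneq ab => /(pref_inj a_lt b_lt) ->; rewrite ltnn.
case/orP: (colex_lt_total ba) => // /(IPA_lt_of_colex b_lt).
by rewrite ltnNge ltnW.
Qed.

Lemma IPA_perm : is_perm_on n (IPA T).
Proof.
split=> [a a_lt|a b a_lt b_lt Eab].
  rewrite /IPA -{2}(size_iota 0 n) ltn_neqAle count_size andbT -all_count.
  by apply/allPn; exists a; rewrite ?mem_iota //= colex_ltE ltxx.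
apply/eqP; apply: contraT => ab.
have Pab : P a != P b by apply: contra ab => /eqP/(pref_inj a_lt b_lt) ->.
by case/orP: (colex_lt_total Pab); rewrite -!IPA_ltE // Eab ltnn.
Qed.

Lemma IPAbar_ltE a b : a < n -> b < n -> (IPAbar T a < IPAbar T b) = colex_lt (P b) (P a).
Proof.
case: IPA_perm => IPA_lt _ a_lt b_lt; rewrite -IPA_ltE // /IPAbar.
have := IPA_lt a a_lt; have := IPA_lt b b_lt => *; apply/idP/idP; lia.
Qed.

Lemma IPAbar_perm : is_perm_on n (IPAbar T).
Proof.
case: IPA_perm => IPA_lt IPA_inj; split=> [a a_lt|a b a_lt b_lt]; rewrite /IPAbar.
  by have := size_gt0; lia.
by have := IPA_lt a a_lt; have := IPA_lt b b_lt => *; apply: IPA_inj => //; lia.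
Qed.

Lemma IPA_colex_ranking : colex_ranking T (IPA T).
Proof. by left; apply: IPA_ltE. Qed.

Lemma IPAbar_colex_ranking : colex_ranking T (IPAbar T).
Proof. by right; apply: IPAbar_ltE. Qed.

(** * Longest previous factors *)

Lemma rlce_geP a b k :
  k <= rlce T a b <-> forall m, m < k -> [/\ a + m < n, b + m < n & t (a + m) = t (b + m)].
Proof.
by rewrite /rlce lcp_geP; split=> H m /H[]; rewrite !size_drop !nth_drop ?ltn_subRL.
Qed.

Lemma rlce_ext a b k : k <= rlce T a b -> a + k < n -> b + k < n -> t (a + k) = t (b + k) ->
  k.+1 <= rlce T a b.
Proof.
move=> /rlce_geP match_k ak bk tk; apply/rlce_geP => m.
by rewrite ltnS leq_eqVlt => /orP[/eqP -> // | /match_k].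
Qed.

Lemma lcp_rev_prefE a b k : a < n -> b < n ->
  (k <= lcp (rev (P a)) (rev (P b))) =
  [&& k <= a.+1, k <= b.+1 & k <= rlce T (a.+1 - k) (b.+1 - k)].
Proof.
move=> a_lt b_lt; rewrite lcp_geE !size_rev !size_pref //.
case: (leqP k a.+1) => //= ka; case: (leqP k b.+1) => //= kb.
have factor c : c < n -> k <= c.+1 -> take k (rev (P c)) = rev (take k (drop (c.+1 - k) T)).
  by move=> c_lt kc; rewrite take_rev size_pref // take_drop subnKC.
rewrite !factor // (inj_eq (can_inj revK)) /rlce lcp_geE !size_drop.
have -> : k <= n - (a.+1 - k) by lia.
by have -> : k <= n - (b.+1 - k) by lia.
Qed.

Lemma LPF_ge pi i j : j < n -> pi j < pi i -> rlce T j i <= LPF T pi i.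
Proof.
move=> j_lt ji; rewrite /LPF; case: eqP => [pi0|_]; first by rewrite pi0 in ji.
exact: (leq_bigmax_cond (Ordinal j_lt) (P := fun j : 'I_n => pi j < pi i)).
Qed.

Lemma LPF_witness pi i : 0 < LPF T pi i ->
  exists j, [/\ j < n, pi j < pi i & rlce T j i = LPF T pi i].
Proof.
rewrite /LPF; case: eqP => // _.
case: (pickP (fun j : 'I_n => pi j < pi i)) => [j0 j0i|none]; last by rewrite big_pred0.
by rewrite (bigop.bigmax_eq_arg j0) //; case: arg_maxnP => // j ji _ _; exists j.
Qed.

Lemma LPF_lt pi i : i < n -> i + LPF T pi i < n.
Proof.
move=> i_lt; case EL: (LPF T pi i) => [|L]; first by rewrite addn0.
have [j [j_lt ji]] : exists j, [/\ j < n, pi j < pi i & rlce T j i = L.+1].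
  by rewrite -EL; apply: LPF_witness; rewrite EL.
move=> Eji; have /rlce_geP/(_ L (ltnSn L)) [jL iL tL] : L.+1 <= rlce T j i by rewrite Eji.
rewrite addnS ltn_neqAle iL andbT; apply/eqP => iLn.
have jLn : j + L = n.-1 by apply: text_last_uniq; rewrite // tL; congr nth; lia.
have eji : j = i by lia.
by rewrite eji ltnn in ji.
Qed.

Section ColexRanking.

Variable pi : nat -> nat.
Hypothesis pi_perm : is_perm_on n pi.
Hypothesis pi_rank : colex_ranking T pi.

Lemma ranking_cyc_succ a b : a < n -> b < n -> t (cyc_succ a) = t (cyc_succ b) ->
  (pi (cyc_succ a) < pi (cyc_succ b)) = (pi a < pi b).
Proof.
move=> a_lt b_lt tab; have sa := cyc_succ_lt a; have sb := cyc_succ_lt b.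
case: pi_rank => piE; rewrite !piE //; first exact: colex_lt_pref_cyc_succ.
exact: colex_lt_pref_cyc_succ (esym tab).
Qed.

Lemma ranking_order_preserving : order_preserving T pi.
Proof.
move=> i j i_lt j_lt ij _ tij.
have [si sj] : i.+1 < n /\ j.+1 < n by lia.
by rewrite -(cyc_succE si) -(cyc_succE sj) ranking_cyc_succ ?cyc_succE //; lia.
Qed.

Lemma ranking_shift a b k : k.+1 <= rlce T a b -> (pi (a + k) < pi (b + k)) = (pi a < pi b).
Proof.
elim: k => [|k IH] match_k; first by rewrite !addn0.
have /rlce_geP/(_ k.+1 (ltnSn _)) [ak bk tk] := match_k.
rewrite -IH ?(leq_trans (leqnSn _) match_k) // !addnS.
have [sa sb] : (a + k).+1 < n /\ (b + k).+1 < n by split; lia.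
rewrite -(cyc_succE sa) -(cyc_succE sb) ranking_cyc_succ //; try lia.
by rewrite (cyc_succE sa) (cyc_succE sb) -!addnS.
Qed.

Lemma ranking_lcp_mid a b c k : a < n -> b < n -> c < n -> pi a < pi b -> pi b < pi c ->
  k <= lcp (rev (P a)) (rev (P c)) -> k <= lcp (rev (P b)) (rev (P c)).
Proof.
move=> a_lt b_lt c_lt; case: pi_rank => piE; rewrite !piE // !colex_ltE.
  move=> ab bc /leq_trans; apply.
  by have := lcp_ltxi_mid ab bc; rewrite leq_min => /andP[].
move=> ba cb /leq_trans; apply; rewrite lcpC [lcp (rev (P b)) _]lcpC.
by have := lcp_ltxi_mid cb ba; rewrite leq_min => /andP[].
Qed.

Lemma LPF_pred_extends i q : i < n -> q < n ->
  (pi q).+1 = pi (cyc_pred (i + LPF T pi i)) -> t (cyc_succ q) = t (i + LPF T pi i) ->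
  LPF T pi i <= cyc_succ q /\ (LPF T pi i).+1 <= rlce T (cyc_succ q - LPF T pi i) i.
Proof.
case: pi_perm => _ pi_inj i_lt q_lt; have := LPF_lt pi i_lt.
case EL: (LPF T pi i) => [|L] x_lt Eq Et.
  split=> //; apply/rlce_geP => m; rewrite ltnS leqn0 subn0 => /eqP ->.
  by rewrite addn0 Et cyc_succ_lt.
have [j [j_lt ji]] : exists j, [/\ j < n, pi j < pi i & rlce T j i = L.+1].
  by rewrite -EL; apply: LPF_witness; rewrite EL.
move=> Eji; have /rlce_geP/(_ L (ltnSn L)) [jL iL _] : L.+1 <= rlce T j i by rewrite Eji.
rewrite addnS /= in Eq.
(* The witness [j], shifted to the end of its match, is ranked below [p = i + L],
   hence not above its predecessor [q], which thus shares [p]'s left context. *)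
have ctx_j : L.+1 <= lcp (rev (P (j + L))) (rev (P (i + L))).
  by rewrite lcp_rev_prefE // !subSS !addnK Eji !ltnS !leq_addl leqnn.
have jq : pi (j + L) <= pi q by rewrite -ltnS Eq ranking_shift ?Eji.
have ctx_q : L.+1 <= lcp (rev (P q)) (rev (P (i + L))).
  move: jq; rewrite leq_eqVlt => /orP[/eqP Ejq | jq].
    by rewrite -(pi_inj _ _ jL q_lt Ejq).
  by apply: ranking_lcp_mid jq _ ctx_j; rewrite -?Eq //; lia.
move: ctx_q; rewrite lcp_rev_prefE // !subSS addnK => /and3P[Lq _ ctx_q].
have q1_lt : q.+1 < n.
  rewrite ltn_neqAle q_lt andbT; apply/eqP => qn.
  have /rlce_geP/(_ L (ltnSn L)) [_ _] := ctx_q; rewrite subnK // => tq.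
  have := text_last_uniq iL; rewrite -tq (_ : q = n.-1) //; lia.
rewrite cyc_succE // subSS in Et *; split=> //.
by apply: rlce_ext; rewrite // addnS subnK.
Qed.

Lemma LPF_pred_next_neq i q : i < n -> q < n ->
  (pi q).+1 = pi (cyc_pred (i + LPF T pi i)) -> t (cyc_succ q) != t (i + LPF T pi i).
Proof.
move=> i_lt q_lt Eq; apply/eqP => Et; have x_lt := LPF_lt pi i_lt.
have [Lq ctx] := LPF_pred_extends i_lt q_lt Eq Et.
suff : pi (cyc_succ q - LPF T pi i) < pi i.
  by move/(LPF_ge (leq_ltn_trans (leq_subr _ _) (cyc_succ_lt q))); rewrite leqNgt ctx.
rewrite -(ranking_shift ctx) subnK // -(cyc_predK x_lt).
by rewrite ranking_cyc_succ ?cyc_predK ?cyc_pred_lt // -Eq.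
Qed.

Lemma PDA_size_le_runs s : size s = n ->
  (forall p, p < n -> nth 0 s (pi p) = t (cyc_succ p)) -> size (PDA T pi) <= runs s.
Proof.
case: pi_perm => pi_lt pi_inj s_size s_pi.
rewrite /PDA size_sort runs_count s_size -size_filter.
set E := [seq i + LPF T pi i | i <- iota 0 n].
have E_lt x : x \in E -> x < n by case/mapP => i; rewrite mem_iota => i_lt ->; apply: LPF_lt.
rewrite -(size_map (fun x => pi (cyc_pred x))); apply: uniq_leq_size.
  rewrite map_inj_in_uniq ?undup_uniq // => x y; rewrite !mem_undup => /E_lt x_lt /E_lt y_lt.
  move/pi_inj => /(_ (cyc_pred_lt x_lt) (cyc_pred_lt y_lt)) Exy.
  by rewrite -(cyc_predK x_lt) Exy cyc_predK.
move=> r /mapP[x]; rewrite mem_undup => /mapP[i]; rewrite mem_iota => i_lt -> ->.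
have p_lt := cyc_pred_lt (LPF_lt pi i_lt).
rewrite mem_filter mem_iota /= pi_lt // andbT /run_start.
have [-> //|r_gt0] := posnP (pi (cyc_pred (i + LPF T pi i))).
have [q q_lt Eq] := is_perm_on_surj pi_perm (leq_ltn_trans (leq_pred _) (pi_lt _ p_lt)).
rewrite /= -Eq !s_pi // cyc_predK ?LPF_lt //; apply: LPF_pred_next_neq => //.
by rewrite Eq prednK.
Qed.

End ColexRanking.

(** * The colexicographic BWT *)

Definition IPA_inv r := find (fun p => IPA T p == r) (iota 0 n).

Lemma IPA_inv_spec r : r < n -> IPA_inv r < n /\ IPA T (IPA_inv r) = r.
Proof.
move=> r_lt; have [p p_lt <-] := is_perm_on_surj IPA_perm r_lt.
have has_p : has (fun j => IPA T j == IPA T p) (iota 0 n).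
  by apply/hasP; exists p; rewrite ?mem_iota.
have inv_lt : IPA_inv (IPA T p) < n by move: has_p; rewrite has_find size_iota.
by split=> //; have /eqP := nth_find 0 has_p; rewrite nth_iota.
Qed.

Lemma IPA_inv_perm : is_perm_on n IPA_inv.
Proof.
split=> [r /IPA_inv_spec[] //|r r' /IPA_inv_spec[_ Er] /IPA_inv_spec[_ Er'] E].
by rewrite -Er -Er' E.
Qed.

Lemma IPA_invK p : p < n -> IPA_inv (IPA T p) = p.
Proof.
case: IPA_perm => IPA_lt IPA_inj p_lt.
by have [inv_lt inv_E] := IPA_inv_spec (IPA_lt p p_lt); apply: IPA_inj.
Qed.

Lemma colex_lt_rot a b : a < n -> b < n -> colex_lt (P a) (P b) ->
  colex_lt (rot a.+1 T) (rot b.+1 T).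
Proof.
move=> a_lt b_lt; rewrite !colex_ltE /rot !rev_cat => ab.
apply: ltxi_cat (ab) _ => -[|w z] Ez; first by move: ab; rewrite Ez cats0 ltxx.
(* [P a] is a proper suffix of [P b]: the next letters compared are the sentinel
   [t n.-1] and the letter [w] preceding that suffix in [P b]. *)
have ab_size : a.+1 + (size z).+1 = b.+1.
  by have := congr1 size Ez; rewrite size_cat !size_rev !size_pref.
have w_eq : w = t (b - a.+1).
  have := congr1 (nth 0 ^~ a.+1) Ez; rewrite nth_cat size_rev size_pref // ltnn subnn /= => <-.
  rewrite nth_rev size_pref // ?subSS ?nth_take //; lia.
case Ed: (rev (drop a.+1 T)) => [|d D].
  by have := congr1 size Ed; rewrite size_rev size_drop /=; lia.
have d_eq : d = t n.-1.
  have := congr1 (nth 0 ^~ 0) Ed; rewrite nth_rev size_drop ?nth_drop /= => [<-|]; last by lia.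
  by congr nth; lia.
rewrite ltxi_cons !leEnat d_eq w_eq.
have last_lt : t n.-1 < t (b - a.+1) by case: T_text => _; apply; lia.
by rewrite ltnW //= leqNgt last_lt.
Qed.

Lemma head_rotS a : a < n -> head 0 (rot a.+1 T) = t (cyc_succ a).
Proof.
rewrite /cyc_succ; case: (ltnP a.+1 n) => [a1_lt|a1_ge] a_lt.
  by rewrite /rot (drop_nth 0 a1_lt).
by rewrite rot_oversize.
Qed.

Lemma perm_rotS : perm_eq [seq rot k.+1 T | k <- iota 0 n] [seq rot k T | k <- iota 0 n].
Proof.
have := size_gt0; case En: n => [//|m] _.
rewrite -[in X in perm_eq X _](addn1 m) iotaD map_cat /= add0n -En rot_size rot0.
by rewrite cats1 perm_rcons (iotaDl 1 0) -map_comp.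
Qed.

Lemma sort_rotations :
  sort colex_le [seq rot k T | k <- iota 0 n] = [seq rot (IPA_inv r).+1 T | r <- iota 0 n].
Proof.
apply: (sorted_eq colex_le_trans colex_le_anti (sort_sorted colex_le_total _)).
  apply: (homo_sorted_in (e := ltn) _ (allss _) (iota_ltn_sorted 0 n)).
  move=> r r'; rewrite !mem_iota => r_lt r'_lt rr'.
  have [inv_lt Einv] := IPA_inv_spec r_lt; have [inv'_lt Einv'] := IPA_inv_spec r'_lt.
  by rewrite /colex_le colex_lt_asym // colex_lt_rot // -IPA_ltE // Einv Einv'.
rewrite perm_sort perm_sym (map_comp (fun k => rot k.+1 T) IPA_inv).
exact: perm_trans (perm_map _ (is_perm_on_perm_eq IPA_inv_perm)) perm_rotS.
Qed.

Lemma size_coBWT : size (coBWT T) = n.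
Proof. by rewrite /coBWT sort_rotations -map_comp size_map size_iota. Qed.

Lemma nth_coBWT_IPA p : p < n -> nth 0 (coBWT T) (IPA T p) = t (cyc_succ p).
Proof.
case: IPA_perm => IPA_lt _ p_lt; rewrite /coBWT sort_rotations -map_comp.
by rewrite (nth_map 0) ?size_iota ?nth_iota ?IPA_lt //= IPA_invK // head_rotS.
Qed.

Lemma nth_rev_coBWT_IPAbar p : p < n -> nth 0 (rev (coBWT T)) (IPAbar T p) = t (cyc_succ p).
Proof.
case: IPA_perm => IPA_lt _ p_lt; have := IPA_lt p p_lt.
rewrite nth_rev size_coBWT /IPAbar => [IPA_p_lt|]; last by lia.
by rewrite -nth_coBWT_IPA //; congr nth; lia.
Qed.

End Text.

Theorem lemma43 (T : seq nat) :
  is_text T ->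
  (is_perm_on (size T) (IPA T) /\ order_preserving T (IPA T)) /\
  (is_perm_on (size T) (IPAbar T) /\ order_preserving T (IPAbar T)) /\
  (size (PDA T (IPA T)) <= runs (coBWT T) /\
   size (PDA T (IPAbar T)) <= runs (coBWT T)).
Proof.
move=> T_text.
split; [split | split; [split | split]].
- exact: IPA_perm.
- exact: (ranking_order_preserving T_text (IPA_colex_ranking T)).
- exact: IPAbar_perm.
- exact: (ranking_order_preserving T_text (IPAbar_colex_ranking T)).
- exact: (PDA_size_le_runs T_text (IPA_perm T) (IPA_colex_ranking T)
            (size_coBWT T_text) (nth_coBWT_IPA T_text)).
- rewrite -runs_rev.
  apply: (PDA_size_le_runs T_text (IPAbar_perm T_text) (IPAbar_colex_ranking T)).
    by rewrite size_rev size_coBWT.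
  exact: nth_rev_coBWT_IPAbar.
Qed.
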